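(* Let $q \geq 2$ be an integer and let $n=(q^2+1)(q+1)$. Let $H_0$ be a graph on $n$ vertices in which each vertex may carry at most one loop, with symmetric $0/1$ adjacency matrix $M$ (where $M_{vv}=1$ exactly when $v$ carries a loop), such that every row of $M$ sums to $q+1$, and such that all eigenvalues of $M$ other than the largest one ($=q+1$) have absolute value at most $\sqrt{2q}$. Let $H$ be the simple graph obtained from $H_0$ by deleting all loops, and assume $H$ contains no cycle of length $3$ or $4$. Let $G_1$ be the simple graph on $V(H)$ in which two distinct vertices $x,y$ are adjacent if and only if there is a vertex $w \notin\{x,y\}$ adjacent in $H$ to both $x$ and $y$ (equivalently, $G_1$ is the union over $v \in V(H)$ of the complete graphs on $N_H(v)$). Then for every $X \subseteq V(G_1)$, \[\left|e_{G_1}(X) - \frac{q}{q^2+1}\binom{|X|}{2}\right| \leq (2q+1)|X|,\] i.e. $G_1$ is $\bigl(q/(q^2+1),\,2q+1\bigr)$-jumbled.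
   Context: For a graph $G$ and $X \subseteq V(G)$, $e_G(X)$ denotes the number of edges of $G$ with both endpoints in $X$. A graph $G$ is $(p,\beta)$-jumbled if $\left|e_G(X) - p\binom{|X|}{2}\right| \leq \beta |X|$ for all $X \subseteq V(G)$. $N_H(v)$ denotes the set of neighbours of $v$ in $H$. *)

From HB Require Import structures.
From mathcomp Require Import all_boot all_order all_algebra.
From mathcomp Require Import algC.
Set Implicit Arguments. Unset Strict Implicit. Unset Printing Implicit Defensive.
Import Order.TTheory GRing.Theory Num.Theory.

Definition adjmx (n : nat) (adj : rel 'I_n) : 'M[algC]_n :=
  \matrix_(i, j) (adj i j)%:R%R.

Definition noloops (n : nat) (adj : rel 'I_n) : rel 'I_n :=
  fun x y => (x != y) && adj x y.

Definition no_C3 (n : nat) (h : rel 'I_n) : Prop :=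
  forall a b c : 'I_n, a != b -> b != c -> a != c ->
    ~ [&& h a b, h b c & h c a].

Definition no_C4 (n : nat) (h : rel 'I_n) : Prop :=
  forall a b c d : 'I_n, uniq [:: a; b; c; d] ->
    ~ [&& h a b, h b c, h c d & h d a].

Definition G1 (n : nat) (h : rel 'I_n) : rel 'I_n :=
  fun x y => (x != y) &&
    [exists w : 'I_n, [&& w != x, w != y, h w x & h w y]].

Definition e_in (n : nat) (g : rel 'I_n) (X : {set 'I_n}) : nat :=
  #|[set p : 'I_n * 'I_n |
      [&& (val p.1 < val p.2)%N, p.1 \in X, p.2 \in X & g p.1 p.2]]|.

Definition jumbled (n : nat) (g : rel 'I_n) (p beta : rat) : Prop :=
  forall X : {set 'I_n},
    (`| (e_in g X)%:R - p * ('C(#|X|, 2))%:R | <= beta * (#|X|)%:R)%R.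

From HB Require Import structures.
From mathcomp Require Import all_boot all_order all_algebra.
From mathcomp Require Import algC spectral sesquilinear.
From mathcomp Require Import ring lra zify.
Set Implicit Arguments. Unset Strict Implicit. Unset Printing Implicit Defensive.
Import Order.TTheory GRing.Theory Num.Theory.

(* Let M be the adjacency matrix of H_0 and x the indicator vector of X.  The
   w-th entry of xM is the number of M-neighbours of w in X, so |xM|^2 counts
   the pairs (a, b) in X^2 with a common M-neighbour w.  The pairs with a = b
   contribute (q+1)|X|; by C4-freeness the pairs with a <> b and w outside
   {a, b} are exactly the ordered edges of G_1, each counted once; the
   remaining pairs need a loop at w = a or w = b and contribute at most 2q|X|.
   On the other hand, the all-ones vector spans the eigenspace of q + 1 and the
   other eigenvalues have square at most 2q, so in an orthonormal eigenbasis
     (q+1)^2 |X|^2 <= n |xM|^2 <= (q+1)^2 |X|^2 + 2q (n |X| - |X|^2).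
   With n = (q^2+1)(q+1), the two estimates of |xM|^2 pin down e_{G_1}(X). *)

Section Counting.
Variable n : nat.
Implicit Types (g h : rel 'I_n) (X : {set 'I_n}).

Definition deg_in g X w : nat := \sum_a ((a \in X) && g w a).

Lemma e_inE g X :
  e_in g X = \sum_a \sum_b [&& val a < val b, a \in X, b \in X & g a b].
Proof.
rewrite /e_in -sum1_card big_mkcond /= [RHS]pair_bigA /=.
by apply: eq_bigr => -[a b] _; rewrite inE; case: ifP.
Qed.

Lemma e_in_double g X : symmetric g -> irreflexive g ->
  (e_in g X).*2 = \sum_a \sum_b [&& a \in X, b \in X & g a b].
Proof.
move=> gsym girr; rewrite e_inE -addnn {2}exchange_big -big_split /=.
apply: eq_bigr => a _; rewrite -big_split /=; apply: eq_bigr => b _.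
rewrite (gsym b a); case: (ltngtP (val a) (val b)) => [_|_|/val_inj->] /=.
- by rewrite addn0.
- by rewrite andbCA.
- by rewrite girr !andbF.
Qed.

Lemma G1_irr h : irreflexive (G1 h).
Proof. by move=> x; rewrite /G1 eqxx. Qed.

Lemma G1_sym h : symmetric (G1 h).
Proof.
move=> x y; rewrite /G1 eq_sym; congr (_ && _); apply: eq_existsb => w.
by case: (w != x) (w != y) (h w x) (h w y) => [] [] [] [].
Qed.

Section C4Free.
Variable h : rel 'I_n.
Hypotheses (h_sym : symmetric h) (h_irr : irreflexive h) (h_C4 : no_C4 h).

Lemma G1_codeg a b : a != b -> G1 h a b = \sum_w (h w a && h w b) :> nat.
Proof.
have neq x y : h x y -> x != y by apply: contraTneq => ->; rewrite h_irr.
move=> nab; rewrite /G1 nab /=; case: existsP => [[w0]|nex]; last first.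
  rewrite big1 // => w _; apply/eqP; rewrite eqb0.
  apply: contra_notN nex => /andP[hwa hwb].
  by exists w; rewrite (neq _ _ hwa) (neq _ _ hwb) hwa hwb.
case/and4P=> w0a w0b hw0a hw0b.
rewrite (bigD1 w0) /= ?hw0a ?hw0b // big1 // => w nw.
apply/eqP; rewrite eqb0; apply/negP => /andP[hwa hwb].
apply: (h_C4 (a := a) (b := w0) (c := b) (d := w)); last first.
  by rewrite h_sym hw0a hw0b h_sym hwb hwa.
rewrite /= !inE !negb_or (eq_sym a w0) w0a nab (eq_sym a w) (neq _ _ hwa) w0b.
by rewrite (eq_sym w0 w) nw (eq_sym b w) (neq _ _ hwb).
Qed.

Lemma sum_deg_in_sq X :
  \sum_w deg_in h X w ^ 2 = (e_in (G1 h) X).*2 + \sum_w deg_in h X w.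
Proof.
have sq w : deg_in h X w ^ 2 =
    \sum_a \sum_b (((a \in X) && h w a) * ((b \in X) && h w b)).
  by rewrite expnS expn1 /deg_in big_distrl; apply: eq_bigr => a _; rewrite big_distrr.
rewrite (eq_bigr _ (fun w _ => sq w)) exchange_big /=.
under eq_bigr do rewrite exchange_big /=.
rewrite (e_in_double _ (@G1_sym h) (@G1_irr h)) /deg_in [Y in _ + Y]exchange_big.
rewrite -big_split /=; apply: eq_bigr => a _.
rewrite (bigD1 a) //= [in RHS](bigD1 a) //= G1_irr !andbF /=.
rewrite add0n addnC; congr (_ + _); last by apply: eq_bigr => w _; case: (_ && _).
apply: eq_bigr => b nb.
rewrite (eq_bigr (fun w => (a \in X) * (b \in X) * (h w a && h w b))) => [|w _].
  rewrite -big_distrr /= -G1_codeg 1?eq_sym //.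
  by case: (a \in X); case: (b \in X); rewrite ?mul1n ?mul0n.
by case: (a \in X); case: (b \in X); rewrite ?mul1n ?mul0n ?muln0 ?mulnb.
Qed.

End C4Free.

Section Loops.
Variable adj : rel 'I_n.
Hypothesis adj_sym : symmetric adj.

Lemma noloops_sym : symmetric (noloops adj).
Proof. by move=> x y; rewrite /noloops eq_sym adj_sym. Qed.

Lemma noloops_irr : irreflexive (noloops adj).
Proof. by move=> x; rewrite /noloops eqxx. Qed.

Lemma deg_in_noloops X w :
  deg_in adj X w = deg_in (noloops adj) X w + ((w \in X) && adj w w).
Proof.
rewrite /deg_in (bigD1 w) //= [in RHS](bigD1 w) //= /noloops eqxx andbF addnC.
by congr (_ + _); apply: eq_bigr => a aw; rewrite eq_sym aw.
Qed.

Variable d : nat.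
Hypothesis adj_reg : forall x, #|[set y | adj x y]| = d.

Lemma deg_in_le X w : deg_in adj X w <= d.
Proof.
rewrite -(adj_reg w) -sum1_card big_mkcond /=; apply: leq_sum => a _.
by rewrite inE; case: (a \in X); case: (adj w a).
Qed.

Lemma sum_deg_in X : \sum_w deg_in adj X w = d * #|X|.
Proof.
rewrite /deg_in exchange_big /= -sum1_card big_distrr /= [RHS]big_mkcond /=.
apply: eq_bigr => a _; case: (a \in X); last by rewrite big1.
rewrite muln1 -(adj_reg a) -sum1_card [RHS]big_mkcond /=.
by apply: eq_bigr => w _; rewrite inE adj_sym.
Qed.

Lemma sum_deg_in_sq_bounds X : no_C4 (noloops adj) ->
  (e_in (G1 (noloops adj)) X).*2 + d * #|X| <= \sum_w deg_in adj X w ^ 2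
    <= (e_in (G1 (noloops adj)) X).*2 + (3 * d - 2) * #|X|.
Proof.
move=> C4; set S := \sum_w _; set e := e_in _ X.
set p := deg_in (noloops adj) X; set L := fun w => (w \in X) && adj w w.
have sq w : deg_in adj X w ^ 2 = p w ^ 2 + L w + 2 * (p w * L w).
  by rewrite deg_in_noloops -/p /L; case: (_ && _) => /=; lia.
have pL w : p w * L w <= (d - 1) * L w.
  have := deg_in_le X w; rewrite deg_in_noloops -/p /L; case: (_ && _) => /=; lia.
have sumL : \sum_w L w <= #|X|.
  rewrite -sum1_card [leqRHS]big_mkcond /=; apply: leq_sum => w _.
  by rewrite /L; case: (w \in X) => //=; apply: leq_b1.
have sum_pL : \sum_w p w * L w <= (d - 1) * #|X|.
  apply: (@leq_trans (\sum_w (d - 1) * L w)); first exact: leq_sum.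
  by rewrite -big_distrr leq_mul2l sumL orbT.
have -> : S = e.*2 + d * #|X| + 2 * \sum_w p w * L w.
  rewrite /S (eq_bigr _ (fun w _ => sq w)) big_split /= big_split /= -big_distrr /=.
  rewrite (sum_deg_in_sq noloops_sym noloops_irr C4) -(sum_deg_in X).
  by rewrite (eq_bigr _ (fun w _ => deg_in_noloops X w)) big_split /= !addnA.
have -> : (3 * d - 2) * #|X| = d * #|X| + 2 * ((d - 1) * #|X|).
  by case: (posnP d) => [->|d0]; rewrite ?mul0n //; nia.
by rewrite leq_addr /= [leqRHS]addnA leq_add2l leq_mul2l sum_pL orbT.
Qed.

End Loops.
End Counting.

Local Open Scope ring_scope.
Local Open Scope sesquilinear_scope.

Lemma char_poly_similar (R : comUnitRingType) n (P A : 'M[R]_n) : P \in unitmx ->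
  char_poly (invmx P *m A *m P) = char_poly A.
Proof.
move=> Pu; rewrite /char_poly /char_poly_mx.
set Pi := map_mx polyC (invmx P); set Pc := map_mx polyC P.
have PiP : Pi *m Pc = 1%:M by rewrite -map_mxM mulVmx // map_mx1.
have -> : 'X%:M - map_mx polyC (invmx P *m A *m P)
          = Pi *m ('X%:M - map_mx polyC A) *m Pc.
  rewrite !map_mxM mulmxBr mulmxBl -!mulmxA; congr (_ - _).
  by rewrite -scalar_mxC mulmxA PiP mul1mx.
by rewrite !det_mulmx mulrAC -det_mulmx PiP det1 mul1r.
Qed.

Section Spectral.
Variable C : numClosedFieldType.

Definition sqnorm n (v : 'rV[C]_n) : C := \sum_j `|v 0 j| ^+ 2.

Lemma sqnormE n (v : 'rV[C]_n) : sqnorm v = (v *m v ^t*) 0 0.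
Proof. by rewrite mxE; apply: eq_bigr => j _; rewrite !mxE normCK. Qed.

Lemma unitarymx_dot n (P : 'M[C]_n) (u v : 'rV[C]_n) : P \is unitarymx ->
  (u *m P) *m (v *m P) ^t* = u *m v ^t*.
Proof.
by move=> /unitarymxP PPt; rewrite trmx_mul map_mxM mulmxA -(mulmxA u) PPt mulmx1.
Qed.

Lemma sqnorm_unitary n (P : 'M[C]_n) (v : 'rV[C]_n) : P \is unitarymx ->
  sqnorm (v *m P) = sqnorm v.
Proof. by move=> Pu; rewrite !sqnormE unitarymx_dot. Qed.

Lemma char_poly_normalmx n (M : 'M[C]_n) : M \is normalmx ->
  char_poly M = \prod_i ('X - (spectral_diag M 0 i)%:P).
Proof.
move=> /orthomx_spectralP {1}->; rewrite char_poly_similar ?spectral_unit //.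
rewrite char_poly_trig ?diag_mx_is_trig //.
by apply: eq_bigr => i _; rewrite mxE eqxx mulr1n.
Qed.

Lemma spectral_diag_split n (M : 'M[C]_n) (c : C) (s : seq C) : M \is normalmx ->
  char_poly M = ('X - c%:P) * \prod_(a <- s) ('X - a%:P) ->
  exists i0, spectral_diag M 0 i0 = c /\
             forall i, i != i0 -> spectral_diag M 0 i \in s.
Proof.
set d := spectral_diag M => /char_poly_normalmx-> hchar.
have : root (\prod_i ('X - (d 0 i)%:P)) c by rewrite hchar rootM root_XsubC eqxx.
rewrite /root horner_prod => /prodf_eq0 [i0 _]; rewrite hornerXsubC subr_eq0.
move=> /eqP di0; exists i0; split=> // i ni; rewrite -root_prod_XsubC.
move: hchar; rewrite (bigD1 i0) //= di0 => /(mulfI (negbT (polyXsubC_eq0 _))) <-.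
by rewrite /root horner_prod; apply/prodf_eq0; exists i; rewrite ?hornerXsubC ?subrr.
Qed.

Section MixingBound.
Variables (n : nat) (M : 'M[C]_n) (c r : C) (s : seq C).
Hypothesis M_normal : M \is normalmx.
Hypothesis M_char : char_poly M = ('X - c%:P) * \prod_(a <- s) ('X - a%:P).
Hypothesis s_small : forall a, a \in s -> `|a| ^+ 2 <= r.
Hypothesis c_gap : r < `|c| ^+ 2.
Hypothesis ones_eigen : (const_mx 1 : 'rV[C]_n) *m M = c *: const_mx 1.

Let P := spectralmx M.
Let d := spectral_diag M.
Let ones : 'rV[C]_n := const_mx 1.

Let P_unitary : P \is unitarymx. Proof. exact: spectral_unitarymx. Qed.

Let PPt : P *m P ^t* = 1%:M. Proof. exact/unitarymxP. Qed.

Let M_diag : M = P ^t* *m diag_mx d *m P.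
Proof. by rewrite -invmx_unitary //; apply/orthomx_spectralP. Qed.

Let rotK (v : 'rV[C]_n) : v *m P ^t* *m P = v.
Proof. by rewrite -mulmxA -invmx_unitary // mulVmx ?mulmx1 ?spectral_unit. Qed.

Lemma ones_spectral_support i : d 0 i != c -> (ones *m P ^t*) 0 i = 0.
Proof.
have : (ones *m P ^t*) *m diag_mx d = c *: (ones *m P ^t*).
  by rewrite scalemxAl -ones_eigen M_diag !mulmxA -(mulmxA _ P) PPt mulmx1.
move=> /rowP/(_ i) + dic; rewrite mul_mx_diag !mxE [c * _]mulrC => /eqP.
by rewrite -subr_eq0 -mulrBr mulf_eq0 subr_eq0 (negbTE dic) orbF => /eqP.
Qed.

Lemma mixing_bound (x : 'rV[C]_n) :
  `|c| ^+ 2 * `|\sum_j x 0 j| ^+ 2 <= n%:R * sqnorm (x *m M) /\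
  n%:R * sqnorm (x *m M) + r * `|\sum_j x 0 j| ^+ 2
    <= `|c| ^+ 2 * `|\sum_j x 0 j| ^+ 2 + r * (n%:R * sqnorm x).
Proof.
have [i0 [di0 ds]] := spectral_diag_split M_normal M_char.
(* Coordinates in the eigenbasis: x = z P, and the all-ones vector is e P with
   e supported on the single coordinate i0 of the eigenvalue c. *)
set z := x *m P ^t*; set e := ones *m P ^t*.
have e0 i : i != i0 -> e 0 i = 0.
  move=> /ds /s_small di; apply: ones_spectral_support; apply: contraTneq di => ->.
  by rewrite lt_geF.
have sum_x : \sum_j x 0 j = z 0 i0 * (e 0 i0)^*.
  have -> : \sum_j x 0 j = (x *m ones ^t*) 0 0.
    by rewrite mxE; apply: eq_bigr => j _; rewrite !mxE conjC1 mulr1.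
  rewrite -(rotK x) -(rotK ones) unitarymx_dot // mxE (bigD1 i0) //= big1 ?addr0.
    by rewrite !mxE.
  by move=> i /e0; rewrite !mxE => ->; rewrite conjC0 mulr0.
have norm_e : n%:R = `|e 0 i0| ^+ 2.
  have : sqnorm ones = n%:R.
    rewrite /sqnorm (eq_bigr (fun _ => 1)) ?sumr_const ?card_ord // => j _.
    by rewrite mxE normr1 expr1n.
  rewrite -(rotK ones) sqnorm_unitary // => <-.
  rewrite /sqnorm (bigD1 i0) //= big1 ?addr0 //.
  by move=> i /e0 ->; rewrite normr0 expr0n.
set T := \sum_(i | i != i0) `|z 0 i| ^+ 2 * `|d 0 i| ^+ 2.
set U := \sum_(i | i != i0) `|z 0 i| ^+ 2.
have norm_xM : sqnorm (x *m M) = `|z 0 i0| ^+ 2 * `|c| ^+ 2 + T.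
  rewrite M_diag !mulmxA sqnorm_unitary // /sqnorm (bigD1 i0) //= -di0.
  by congr (_ + _); [|apply: eq_bigr => i _]; rewrite mul_mx_diag mxE normrM exprMn.
have norm_x : sqnorm x = `|z 0 i0| ^+ 2 + U.
  by rewrite -(rotK x) sqnorm_unitary // /sqnorm (bigD1 i0).
have sum_x2 : `|\sum_j x 0 j| ^+ 2 = n%:R * `|z 0 i0| ^+ 2.
  by rewrite sum_x normrM norm_conjC exprMn norm_e mulrC.
have T0 : 0 <= T by apply: sumr_ge0 => i _; rewrite mulr_ge0 ?exprn_ge0.
have TU : T <= r * U.
  rewrite mulr_sumr; apply: ler_sum => i /ds /s_small di.
  by rewrite mulrC ler_wpM2r ?exprn_ge0.
have n0 : 0 <= n%:R :> C := ler0n _ _.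
rewrite norm_xM norm_x sum_x2; split; rewrite -subr_ge0.
  by rewrite (_ : _ - _ = n%:R * T) ?mulr_ge0 //; ring.
rewrite (_ : _ - _ = n%:R * (r * U - T)) ?mulr_ge0 ?subr_ge0 //; ring.
Qed.

End MixingBound.
End Spectral.

Lemma adjmx_mixing n (adj : rel 'I_n) (d r : nat) (s : seq algC) (X : {set 'I_n}) :
  symmetric adj -> (forall x, #|[set y | adj x y]| = d) ->
  char_poly (adjmx adj) = ('X - d%:R%:P) * \prod_(a <- s) ('X - a%:P) ->
  (forall a, a \in s -> `|a| ^+ 2 <= r%:R) -> (r < d ^ 2)%N ->
  (d ^ 2 * #|X| ^ 2 <= n * \sum_w deg_in adj X w ^ 2)%N /\
  (n * \sum_w deg_in adj X w ^ 2 + r * #|X| ^ 2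
     <= d ^ 2 * #|X| ^ 2 + r * (n * #|X|))%N.
Proof.
move=> adj_sym adj_reg M_char s_small gap; set M := adjmx adj.
have M_normal : M \is normalmx.
  apply/hermitian_normalmx/is_hermitianmxP; rewrite expr0 scale1r.
  by apply/matrixP => i j; rewrite !mxE conjC_nat adj_sym.
have ones_eigen : (const_mx 1 : 'rV[algC]_n) *m M = d%:R *: const_mx 1.
  apply/rowP => j; rewrite !mxE mulr1 -(adj_reg j) -sum1_card natr_sum.
  rewrite [RHS]big_mkcond /=.
  by apply: eq_bigr => i _; rewrite !mxE mul1r inE adj_sym; case: (adj j i).
have gap' : r%:R < `|d%:R| ^+ 2 :> algC by rewrite normr_nat -natrX ltr_nat.
set x : 'rV[algC]_n := \row_i (i \in X)%:R.
have [lo hi] := mixing_bound M_normal M_char s_small gap' ones_eigen x.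
have sum_x : \sum_j x 0 j = #|X|%:R.
  rewrite -sum1_card natr_sum [RHS]big_mkcond /=.
  by apply: eq_bigr => j _; rewrite mxE; case: (j \in X).
have norm_x : sqnorm x = #|X|%:R.
  rewrite -sum1_card natr_sum [RHS]big_mkcond /=.
  apply: eq_bigr => j _; rewrite mxE.
  by case: (j \in X); rewrite ?normr1 ?normr0 ?expr1n ?expr0n.
have norm_xM : sqnorm (x *m M) = (\sum_w deg_in adj X w ^ 2)%:R.
  rewrite natr_sum; apply: eq_bigr => w _; rewrite natrX -normr_nat; congr (`|_| ^+ 2).
  rewrite !mxE natr_sum; apply: eq_bigr => a _; rewrite !mxE adj_sym.
  by case: (a \in X); case: (adj w a); rewrite ?mul1r ?mul0r.
rewrite sum_x norm_x norm_xM !normr_nat -!natrX -!natrM -!natrD !ler_nat in lo hi.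
by split.
Qed.

Lemma bin2_double k : ('C(k, 2) * 2 + k = k * k)%N.
Proof. by elim: k => // k IH; rewrite binS bin1; lia. Qed.

Lemma jumbled_real_bound (R : realFieldType) (q k e S C : R) (D := q ^+ 2 + 1) :
  1 <= q -> 0 <= k -> C * 2 + k = k ^+ 2 ->
  (q + 1) ^+ 2 * k ^+ 2 <= D * (q + 1) * S ->
  D * (q + 1) * S + 2 * q * k ^+ 2
    <= (q + 1) ^+ 2 * k ^+ 2 + 2 * q * (D * (q + 1) * k) ->
  e * 2 + (q + 1) * k <= S -> S <= e * 2 + (3 * q + 1) * k ->
  `|e - q / D * C| <= (2 * q + 1) * k.
Proof.
move=> q1 k0 hC lo hi Slo Shi.
have D0 : 0 < D by rewrite /D; nra.
have q10 : 0 < q + 1 by lra.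
have -> : e - q / D * C = (D * e - q * C) / D by field; rewrite gt_eqF.
rewrite normrM normfV (gtr0_norm D0) ler_pdivrMr // ler_norml.
have DS : (q + 1) * k ^+ 2 <= D * S by rewrite -(ler_pM2l q10); nra.
have DShi := ler_wpM2l (ltW D0) Shi.
have DSlo := ler_wpM2l (ltW D0) Slo.
apply/andP; split; first nra.
rewrite -(ler_pM2l q10).
have := ler_wpM2l (ltW q10) DSlo.
have hCq : q * (q + 1) * (C * 2 + k) = q * (q + 1) * k ^+ 2 by rewrite hC.
(* (q + 1) times the slack of the upper estimate *)
have res : 0 <= k ^+ 2 * (q - 1) + k * ((q + 1) * (D * (3 * q + 3) - q)).
  apply: addr_ge0; first by apply: mulr_ge0; nra.
  by apply: mulr_ge0 => //; apply: mulr_ge0; rewrite /D; nra.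
rewrite /D in hCq res hi *; nra.
Qed.

Lemma jumbled_of_counts (q k e S : nat) : (1 <= q)%N ->
  ((q + 1) ^ 2 * k ^ 2 <= (q ^ 2 + 1) * (q + 1) * S)%N ->
  ((q ^ 2 + 1) * (q + 1) * S + 2 * q * k ^ 2
     <= (q + 1) ^ 2 * k ^ 2 + 2 * q * ((q ^ 2 + 1) * (q + 1) * k))%N ->
  (e.*2 + (q + 1) * k <= S <= e.*2 + (3 * (q + 1) - 2) * k)%N ->
  `|e%:R - q%:R / (q ^ 2 + 1)%:R * 'C(k, 2)%:R| <= (2 * q + 1)%:R * k%:R :> rat.
Proof.
move=> q1 lo hi /andP[Slo Shi].
have hC := congr1 (GRing.natmul (1 : rat)) (bin2_double k).
rewrite (_ : 3 * (q + 1) - 2 = 3 * q + 1)%N in Shi; last by lia.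
rewrite -!muln2 -!(ler_nat rat) in q1 lo hi Slo Shi.
rewrite !(natrD, natrM, natrX) in q1 lo hi Slo Shi hC *.
exact: (jumbled_real_bound q1 (ler0n _ k) hC lo hi Slo Shi).
Qed.

Theorem mainTheorem3 (q : nat) (hq : (2 <= q)%N)
  (adj : rel 'I_((q ^ 2 + 1) * (q + 1)))
  (hsym : symmetric adj)
  (hdeg : forall x, #|[set y | adj x y]| = (q + 1)%N)
  (hspec : exists s : seq algC,
     [/\ size s = ((q ^ 2 + 1) * (q + 1)).-1,
         char_poly (adjmx adj)
           = ('X - ((q + 1)%:R)%:P) * \prod_(a <- s) ('X - a%:P)
       & forall a, a \in s -> `|a| <= sqrtC (2 * q)%:R]%R)
  (hC3 : no_C3 (noloops adj))
  (hC4 : no_C4 (noloops adj)) :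
  jumbled (G1 (noloops adj)) (q%:R / (q ^ 2 + 1)%:R)%R (2 * q + 1)%:R%R.
Proof.
move=> X; have [s [_ M_char s_small]] := hspec.
have s_small2 a : a \in s -> `|a| ^+ 2 <= (2 * q)%:R.
  by move=> /s_small ha; rewrite -(sqrtCK (2 * q)%:R) !expr2 ler_pM.
have gap : (2 * q < (q + 1) ^ 2)%N by lia.
have [lo hi] := adjmx_mixing X hsym hdeg M_char s_small2 gap.
apply: (jumbled_of_counts _ lo hi); first lia.
exact: sum_deg_in_sq_bounds.
Qed.
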